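(* Let $\mathcal{X}\subseteq\mathcal{B}(0,R)$ be compact convex, $\mathcal{Z}$ a set and $f:\mathcal{X}\times\mathcal{Z}\to\mathbb{R}$ with $f(\cdot,z)\in\mathcal{F}^0_{\mathcal{X}}(L)$ for all $z$. Let $\pi$ be any permutation of $[n]$, $K\ge1$, $T=nK$, and let $(\eta_t)_{t\in[T]}$ be a non-increasing sequence of positive step sizes. Fixed-permutation SGD $\mathcal{A}_{\sf PerSGD}$ on $S=(z_1,\dots,z_n)$: start from a fixed initial point $x^0_{n+1}\in\mathcal{X}$; for $k=1,\dots,K$ set $x^k_1=x^{k-1}_{n+1}$ and for $t=1,\dots,n$ set $x^k_{t+1}=\mathsf{Proj}_{\mathcal{X}}(x^k_t-\eta_{(k-1)n+t}\nabla f(x^k_t,z_{\pi(t)}))$, and let $\bar\eta_k=\sum_{t=1}^n\eta_{(k-1)n+t}$; output $\bar x^K=\frac{1}{\sum_{k\in[K]}\bar\eta_k}\sum_{k\in[K]}\bar\eta_k x^k_1$. Then, with the same $\pi$ and initial point used for both datasets, $$\sup_{S\simeq S'}\|\mathcal{A}_{\sf PerSGD}(S)-\mathcal{A}_{\sf PerSGD}(S')\|\le\min\Big\{2R,\;2L\Big(\sqrt{\sum_{t=1}^{T-1}\eta_t^2}+\frac2n\sum_{t=1}^{T-1}\eta_t\Big)\Big\}.$$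
   Context: $\|\cdot\|$ is the Euclidean norm, $\mathcal{B}(0,R)$ the Euclidean ball of radius $R$, $\mathsf{Proj}_{\mathcal{X}}$ the Euclidean projection. $\mathcal{F}^0_{\mathcal{X}}(L)$ is the class of convex $L$-Lipschitz functions on $\mathcal{X}$ (Lipschitz on an open set containing $\mathcal{X}$, so subgradients have norm at most $L$). $\nabla f(x,z)$ is a fixed arbitrary selection of a subgradient of $f(\cdot,z)$ at $x$. Datasets $S,S'\in\mathcal{Z}^n$ are neighboring, $S\simeq S'$, if they differ in at most one entry. *)

From HB Require Import structures.
From mathcomp Require Import all_boot all_order all_algebra all_fingroup.
From mathcomp Require Import all_classical all_reals all_analysis.
Import numFieldNormedType.Exports.
Set Implicit Arguments. Unset Strict Implicit. Unset Printing Implicit Defensive.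
Import Order.TTheory GRing.Theory Num.Theory.
Local Open Scope classical_set_scope.
Local Open Scope ring_scope.

Section Defs.
Variables (R : realType) (d : nat).
Notation vec := 'rV[R]_d.

Definition dotv (u v : vec) : R := \sum_(i < d) u 0 i * v 0 i.
Definition enorm (u : vec) : R := Num.sqrt (dotv u u).

Definition convex_on (X : set vec) (h : vec -> R) : Prop :=
  forall x y t, X x -> X y -> 0 <= t <= 1 ->
    h (t *: x + (1 - t) *: y) <= t * h x + (1 - t) * h y.

Definition is_proj (X : set vec) (P : vec -> vec) : Prop :=
  forall x, X (P x) /\ forall y, X y -> enorm (x - P x) <= enorm (x - y).

(* Fixed-permutation SGD.  Step sizes eta are indexed from 1 (eta 1, ..., eta T). *)
Variables (Z : Type) (n : nat).

(* one epoch k (k >= 1): x^k_1 |-> x^k_{n+1}; t ranges over 'I_n (t = 0..n-1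
   corresponds to the paper's t = 1..n) *)
Definition persgd_epoch (P : vec -> vec) (g : Z -> vec -> vec) (eta : nat -> R)
  (pi : {perm 'I_n}) (S : 'I_n -> Z) (k : nat) (x : vec) : vec :=
  foldl (fun y (t : 'I_n) =>
           P (y - eta ((k - 1) * n + t.+1)%N *: g (S (pi t)) y)) x (enum 'I_n).

(* persgd_start j = x^{j+1}_1  (so persgd_start 0 = x^0_{n+1} = x0) *)
Fixpoint persgd_start P g eta pi S (x0 : vec) (j : nat) : vec :=
  match j with
  | 0 => x0
  | j'.+1 => persgd_epoch P g eta pi S j (persgd_start P g eta pi S x0 j')
  end.

Definition etabar (eta : nat -> R) (k : nat) : R :=
  \sum_(t < n) eta ((k - 1) * n + t.+1)%N.

Definition persgd P g eta pi (x0 : vec) (K : nat) (S : 'I_n -> Z) : vec :=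
  (\sum_(k < K) etabar eta k.+1)^-1 *:
    \sum_(k < K) (etabar eta k.+1 *: persgd_start P g eta pi S x0 k).

Definition neighboring (S S' : 'I_n -> Z) : Prop :=
  exists i : 'I_n, forall j, j != i -> S j = S' j.

End Defs.

(* Both runs use the same permutation, so in every pass exactly one step, at
   position p = pi^-1(i), sees the differing sample.  Projection is
   nonexpansive; at a step with a common sample the monotonicity of
   subgradients gives |d'|^2 <= |d|^2 + (2 L eta)^2, and at the differing step
   |d'| <= |d| + 2 L eta.  Hence |d| <= sqrt A + B is preserved when A collects
   the squares of the common steps and B the linear terms of the differing
   ones.  In the first pass the runs agree up to the differing step, which
   therefore only enters A; every later differing step is, eta being
   non-increasing, at most the mean step of the previous pass, so
   B <= (2 L / n) sum eta.  The output is a weighted mean of the pass starting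
   points, hence no farther apart than the worst of them, and those lie in the
   ball of radius R. *)

From HB Require Import structures.
From mathcomp Require Import all_boot all_order all_algebra all_fingroup.
From mathcomp Require Import all_classical all_reals all_analysis.
From mathcomp Require Import ring lra zify.
Import numFieldNormedType.Exports.
Import Order.TTheory GRing.Theory Num.Theory.
Local Open Scope classical_set_scope.
Local Open Scope ring_scope.
Set Implicit Arguments. Unset Strict Implicit. Unset Printing Implicit Defensive.

Section Euclidean.
Variables (R : realType) (d : nat).
Implicit Types u v w : 'rV[R]_d.

Lemma dotvC u v : dotv u v = dotv v u.
Proof. by apply: eq_bigr => i _; rewrite mulrC. Qed.

Lemma dotvDl u v w : dotv (u + v) w = dotv u w + dotv v w.
Proof. by rewrite /dotv -big_split; apply: eq_bigr => i _; rewrite mxE mulrDl. Qed.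

Lemma dotvZl a u w : dotv (a *: u) w = a * dotv u w.
Proof. by rewrite /dotv mulr_sumr; apply: eq_bigr => i _; rewrite mxE mulrA. Qed.

Lemma dotvNl u w : dotv (- u) w = - dotv u w.
Proof. by rewrite -scaleN1r dotvZl mulN1r. Qed.

Lemma dotvBl u v w : dotv (u - v) w = dotv u w - dotv v w.
Proof. by rewrite dotvDl dotvNl. Qed.

Lemma dotvDr u v w : dotv w (u + v) = dotv w u + dotv w v.
Proof. by rewrite dotvC dotvDl !(dotvC w). Qed.

Lemma dotvZr a u w : dotv w (a *: u) = a * dotv w u.
Proof. by rewrite dotvC dotvZl dotvC. Qed.

Lemma dotvBr u v w : dotv w (u - v) = dotv w u - dotv w v.
Proof. by rewrite !(dotvC w) dotvBl. Qed.

Lemma dotvv_ge0 u : 0 <= dotv u u.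
Proof. by apply: sumr_ge0 => i _; rewrite -expr2 sqr_ge0. Qed.

Lemma dotvv_eq0 u : (dotv u u == 0) = (u == 0).
Proof.
apply/idP/eqP => [|->]; last by rewrite /dotv big1 // => i _; rewrite mxE mul0r.
rewrite psumr_eq0 => [/allP u0|i _]; last by rewrite -expr2 sqr_ge0.
apply/rowP => i; rewrite mxE; apply/eqP.
by rewrite -sqrf_eq0 expr2; apply: u0 (mem_index_enum _).
Qed.

Lemma enorm_ge0 u : 0 <= enorm u.
Proof. exact: sqrtr_ge0. Qed.

Lemma enorm_sqr u : enorm u ^+ 2 = dotv u u.
Proof. by rewrite sqr_sqrtr // dotvv_ge0. Qed.

Lemma enorm0 : enorm (0 : 'rV[R]_d) = 0.
Proof. by rewrite /enorm /dotv big1 ?sqrtr0 // => i _; rewrite mxE mul0r. Qed.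

Lemma ler_enorm u v : (enorm u <= enorm v) = (dotv u u <= dotv v v).
Proof. by rewrite ler_sqrt // dotvv_ge0. Qed.

Lemma cauchy_schwarz u v : dotv u v <= enorm u * enorm v.
Proof.
have [->|u0] := eqVneq u 0.
  by rewrite /dotv big1 ?mulr_ge0 ?enorm_ge0 // => i _; rewrite mxE mul0r.
have [->|v0] := eqVneq v 0.
  by rewrite /dotv big1 ?mulr_ge0 ?enorm_ge0 // => i _; rewrite mxE mulr0.
have nu : 0 < enorm u by rewrite sqrtr_gt0 lt_def dotvv_eq0 u0 dotvv_ge0.
have nv : 0 < enorm v by rewrite sqrtr_gt0 lt_def dotvv_eq0 v0 dotvv_ge0.
have := dotvv_ge0 (enorm v *: u - enorm u *: v).
rewrite !(dotvBl, dotvBr, dotvZl, dotvZr) -!enorm_sqr (dotvC v u) => H.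
have : 0 <= 2 * enorm u * enorm v * (enorm u * enorm v - dotv u v) by nra.
by rewrite pmulr_rge0 ?subr_ge0 // !mulr_gt0.
Qed.

Lemma enormD_le u v : enorm (u + v) <= enorm u + enorm v.
Proof.
rewrite -(@ler_pXn2r _ 2) ?nnegrE ?addr_ge0 ?enorm_ge0 //.
rewrite enorm_sqr !(dotvDl, dotvDr) (dotvC v u) sqrrD !enorm_sqr.
have := cauchy_schwarz u v; lra.
Qed.

Lemma enormZ a u : enorm (a *: u) = `|a| * enorm u.
Proof. by rewrite /enorm dotvZl dotvZr mulrA -expr2 sqrtrM ?sqr_ge0 // sqrtr_sqr. Qed.

Lemma enormN u : enorm (- u) = enorm u.
Proof. by rewrite -scaleN1r enormZ normrN normr1 mul1r. Qed.

Lemma enormB_le u v : enorm (u - v) <= enorm u + enorm v.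
Proof. by rewrite -(enormN v) enormD_le. Qed.

Lemma enorm_sum_le (I : finType) (F : I -> 'rV[R]_d) :
  enorm (\sum_i F i) <= \sum_i enorm (F i).
Proof.
elim/big_rec2: _ => [|i a b _ ab]; first by rewrite enorm0.
by apply: le_trans (enormD_le _ _) _; rewrite lerD2l.
Qed.

End Euclidean.

Lemma subgradient_monotone (R : realType) (d : nat) (X : set 'rV[R]_d)
    (f : 'rV[R]_d -> R) (g : 'rV[R]_d -> 'rV[R]_d) :
  (forall x, X x -> forall y, X y -> f y >= f x + dotv (g x) (y - x)) ->
  forall x y, X x -> X y -> 0 <= dotv (g x - g y) (x - y).
Proof.
move=> subg x y xX yX; have := subg _ xX _ yX; have := subg _ yX _ xX.
by rewrite dotvBl !dotvBr; lra.
Qed.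

Section Projection.
Variables (R : realType) (d : nat) (X : set 'rV[R]_d) (P : 'rV[R]_d -> 'rV[R]_d).
Hypotheses (convexX : convex_set X) (projP : is_proj X P).

Lemma convex_set_comb x y t : X x -> X y -> 0 <= t <= 1 -> X (t *: x + (1 - t) *: y).
Proof.
move=> xX yX /andP[t0 t1].
by have := convexX (Itv01 t0 t1) (x := x) (y := y); rewrite !inE; apply.
Qed.

Lemma proj_obtuse x y : X y -> dotv (x - P x) (y - P x) <= 0.
Proof.
move=> yX; set w := x - P x; set e := y - P x.
have toward_y t : 0 < t <= 1 -> 2 * dotv w e <= t * dotv e e.
  case/andP=> t0 t1.
  have : enorm w <= enorm (w - t *: e).
    have -> : w - t *: e = x - (t *: y + (1 - t) *: P x).
      by apply/rowP => i; rewrite /w /e !mxE; ring.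
    by apply: (projP x).2; apply: convex_set_comb (projP x).1 _; rewrite ?(ltW t0).
  clearbody w e.
  rewrite ler_enorm !(dotvBl, dotvBr, dotvZl, dotvZr) (dotvC e w) => h.
  have : 0 <= t * (t * dotv e e - 2 * dotv w e) by nra.
  by rewrite pmulr_rge0 // subr_ge0.
(* If dotv w e > 0, then t = dotv w e / (dotv e e + dotv w e) has
   t * dotv e e <= dotv w e, contradicting toward_y. *)
rewrite leNgt; apply/negP => c0.
have b0 := dotvv_ge0 e.
have bc : 0 < dotv e e + dotv w e by rewrite ltr_wpDl.
have t1 : dotv w e / (dotv e e + dotv w e) <= 1 by rewrite ler_pdivrMr // mul1r lerDr.
have := toward_y _ (introT andP (conj (divr_gt0 c0 bc) t1)).
have : dotv w e / (dotv e e + dotv w e) * dotv e e <= dotv w e.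
  by rewrite mulrAC ler_pdivrMr //; nra.
lra.
Qed.

Lemma proj_nonexpansive x y : enorm (P x - P y) <= enorm (x - y).
Proof.
have hx := proj_obtuse x (projP y).1.
have hy := proj_obtuse y (projP x).1.
have cs := cauchy_schwarz (x - y) (P x - P y).
have e : dotv (x - P x) (P y - P x) + dotv (y - P y) (P x - P y) =
   enorm (P x - P y) ^+ 2 - dotv (x - y) (P x - P y).
  rewrite enorm_sqr /dotv -sumrB -big_split /=.
  by apply: eq_bigr => i _; rewrite !mxE; ring.
have := enorm_ge0 (P x - P y); have := enorm_ge0 (x - y); nra.
Qed.

Variable L : R.

Lemma proj_step_mono_sqr (g : 'rV[R]_d -> 'rV[R]_d) e x y :
  (forall x y, X x -> X y -> 0 <= dotv (g x - g y) (x - y)) ->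
  (forall x, X x -> enorm (g x) <= L) -> 0 <= e -> X x -> X y ->
  enorm (P (x - e *: g x) - P (y - e *: g y)) ^+ 2 <=
  enorm (x - y) ^+ 2 + (2 * L * e) ^+ 2.
Proof.
move=> gmono gL e0 xX yX.
have gxy : enorm (g x - g y) <= 2 * L.
  by apply: le_trans (enormB_le _ _) _; have := gL _ xX; have := gL _ yX; lra.
apply: le_trans (_ : enorm (x - y - e *: (g x - g y)) ^+ 2 <= _).
  rewrite lerXn2r ?nnegrE ?enorm_ge0 //.
  apply: le_trans (proj_nonexpansive _ _) _.
  by have -> : x - e *: g x - (y - e *: g y) = x - y - e *: (g x - g y)
    by apply/rowP => i; rewrite !mxE; ring.
have := gmono _ _ xX yX; have := enorm_ge0 (g x - g y).
move: (x - y) (g x - g y) gxy => a b ab b0 ba.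
rewrite enorm_sqr !(dotvBl, dotvBr, dotvZl, dotvZr) -!enorm_sqr (dotvC a b).
have : enorm b ^+ 2 <= (2 * L) ^+ 2 by rewrite lerXn2r ?nnegrE // (le_trans b0 ab).
have := mulr_ge0 e0 ba; have := sqr_ge0 e; nra.
Qed.

Lemma proj_step_le (g1 g2 : 'rV[R]_d -> 'rV[R]_d) e x y :
  (forall x, X x -> enorm (g1 x) <= L) -> (forall x, X x -> enorm (g2 x) <= L) ->
  0 <= e -> X x -> X y ->
  enorm (P (x - e *: g1 x) - P (y - e *: g2 y)) <= enorm (x - y) + 2 * L * e.
Proof.
move=> g1L g2L e0 xX yX.
apply: le_trans (proj_nonexpansive _ _) _.
have -> : x - e *: g1 x - (y - e *: g2 y) = (x - y) + e *: (g2 y - g1 x).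
  by apply/rowP => i; rewrite !mxE; ring.
apply: le_trans (enormD_le _ _) _.
rewrite enormZ ger0_norm // lerD2l mulrC ler_wpM2r //.
by apply: le_trans (enormB_le _ _) _; have := g1L _ xX; have := g2L _ yX; lra.
Qed.

End Projection.

Lemma le_sqrtD_sqr (R : rcfType) (A B a u v : R) :
  0 <= A -> 0 <= B -> 0 <= u -> 0 <= v ->
  u <= Num.sqrt A + B -> v ^+ 2 <= u ^+ 2 + a ^+ 2 -> v <= Num.sqrt (A + a ^+ 2) + B.
Proof.
move=> A0 B0 u0 v0 uAB vua.
have s0 := sqrtr_ge0 A; have sA := sqr_sqrtr A0.
have sAa := sqr_sqrtr (addr_ge0 A0 (sqr_ge0 a)).
have ss : Num.sqrt A <= Num.sqrt (A + a ^+ 2).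
  by rewrite ler_sqrt ?lerDl ?sqr_ge0 // addr_ge0 ?sqr_ge0.
rewrite -(@ler_pXn2r _ 2) ?nnegrE ?addr_ge0 ?sqrtr_ge0 //.
have : u ^+ 2 <= (Num.sqrt A + B) ^+ 2 by rewrite lerXn2r ?nnegrE ?addr_ge0.
have : 0 <= B * (Num.sqrt (A + a ^+ 2) - Num.sqrt A) by rewrite mulr_ge0 ?subr_ge0.
nra.
Qed.

Section SGDPass.
Variables (R : realType) (d : nat) (X : set 'rV[R]_d) (P : 'rV[R]_d -> 'rV[R]_d).
Hypotheses (convexX : convex_set X) (projP : is_proj X P).
Variables (L : R) (Z T : Type) (g : Z -> 'rV[R]_d -> 'rV[R]_d).
Hypotheses (g_mono : forall z x y, X x -> X y -> 0 <= dotv (g z x - g z y) (x - y))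
  (g_bounded : forall z x, X x -> enorm (g z x) <= L).

Definition sgd_pass (e : T -> R) (z : T -> Z) (x : 'rV[R]_d) (s : seq T) :=
  foldl (fun y t => P (y - e t *: g (z t) y)) x s.

Lemma sgd_pass_in e z x s : X x -> X (sgd_pass e z x s).
Proof. by elim: s x => [|t s IHs] x xX //=; apply: IHs; exact: (projP _).1. Qed.

Variables (e : T -> R) (z z' : T -> Z) (D : pred T).
Hypotheses (e_ge0 : forall t, 0 <= e t) (zz' : forall t, ~~ D t -> z t = z' t).

Lemma sgd_pass_dist x y s A B : X x -> X y -> 0 <= A -> 0 <= B ->
  enorm (x - y) <= Num.sqrt A + B ->
  enorm (sgd_pass e z x s - sgd_pass e z' y s) <=
  Num.sqrt (A + \sum_(t <- s) (2 * L * e t) ^+ 2) + (B + \sum_(t <- s | D t) 2 * L * e t).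
Proof.
elim: s x y A B => [|t s IHs] x y A B xX yX A0 B0 xyAB /=.
  by rewrite !big_nil !addr0.
have L0 : 0 <= L := le_trans (enorm_ge0 _) (g_bounded (z t) xX).
have sq0 : 0 <= \sum_(t <- s) (2 * L * e t) ^+ 2 by apply: sumr_ge0 => *; rewrite sqr_ge0.
rewrite !big_cons; case Dt: (D t) => /=.
  have e2 : 0 <= 2 * L * e t by rewrite !mulr_ge0.
  have step : enorm (P (x - e t *: g (z t) x) - P (y - e t *: g (z' t) y)) <=
              Num.sqrt A + (B + 2 * L * e t).
    apply: le_trans (proj_step_le convexX projP (g_bounded _) (g_bounded _) _ xX yX) _ => //.
    by rewrite addrA lerD2r.
  apply: le_trans (IHs _ _ _ _ (projP _).1 (projP _).1 A0 (addr_ge0 B0 e2) step) _.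
  rewrite [B + (_ + _)]addrA lerD2r ler_sqrt ?addr_ge0 ?lerD2l ?lerDr ?sqr_ge0 //.
have <- := zz' (negbT Dt).
rewrite [A + _]addrA; apply: IHs; rewrite ?addr_ge0 ?sqr_ge0 //; try exact: (projP _).1.
apply: le_sqrtD_sqr A0 B0 (enorm_ge0 _) (enorm_ge0 _) xyAB _.
exact: (proj_step_mono_sqr convexX projP (g_mono _) (g_bounded _)).
Qed.

Lemma sgd_pass_dist_same x s : X x -> (count D s <= 1)%N ->
  enorm (sgd_pass e z x s - sgd_pass e z' x s) <=
  Num.sqrt (\sum_(t <- s) (2 * L * e t) ^+ 2).
Proof.
elim: s x => [|t s IHs] x xX /=; first by rewrite big_nil subrr enorm0 sqrtr0.
rewrite big_cons; case Dt: (D t) => /= countD.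
  have L0 : 0 <= L := le_trans (enorm_ge0 _) (g_bounded (z t) xX).
  have nD : ~~ has D s by rewrite has_count -leqNgt; lia.
  have first : enorm (P (x - e t *: g (z t) x) - P (x - e t *: g (z' t) x)) <=
               Num.sqrt ((2 * L * e t) ^+ 2) + 0.
    rewrite addr0 sqrtr_sqr ger0_norm ?mulr_ge0 //.
    apply: le_trans (proj_step_le convexX projP (g_bounded _) (g_bounded _) _ xX xX) _ => //.
    by rewrite subrr enorm0 add0r.
  apply: le_trans (sgd_pass_dist s (projP _).1 (projP _).1 (sqr_ge0 _) (lexx 0) first) _.
  by rewrite (big_hasC _ _ _ nD) !addr0.
have <- := zz' (negbT Dt).
apply: le_trans (IHs _ (projP _).1 countD) _.
by rewrite ler_sqrt ?lerDr ?sqr_ge0 // addr_ge0 ?sqr_ge0 // sumr_ge0 // => *; rewrite sqr_ge0.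
Qed.

End SGDPass.

Section Sums.
Variable R : numDomainType.

Lemma sumr_ord_gt0 m (F : 'I_m -> R) :
  (0 < m)%N -> (forall i, 0 < F i) -> 0 < \sum_(i < m) F i.
Proof.
case: m F => // m F _ F0; rewrite big_ord_recl ltr_wpDr ?F0 //.
by apply: sumr_ge0 => i _; exact: ltW.
Qed.

Lemma ler_sum_nat_widen (F : nat -> R) m p q : (p <= q)%N ->
  (forall t, (p <= t < q)%N -> 0 <= F t) ->
  \sum_(m <= t < p) F t <= \sum_(m <= t < q) F t.
Proof.
move=> pq F0; have [mp|pm] := leqP m p.
  rewrite (big_cat_nat mp pq) lerDl big_nat_cond.
  by apply: sumr_ge0 => t /andP[+ _]; exact: F0.
rewrite big_geq ?(ltnW pm) // big_nat_cond; apply: sumr_ge0 => t /andP[/andP[mt tq] _].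
by apply: F0; rewrite tq andbT (leq_trans (ltnW pm)).
Qed.

Lemma big_nat_block (V : nmodType) (F : nat -> V) n j :
  \sum_(1 <= t < (j.+1 * n).+1) F t =
  \sum_(1 <= t < (j * n).+1) F t + \sum_(t < n) F (j * n + t.+1).
Proof.
rewrite (@big_cat_nat _ _ _ (j * n).+1 1) //; last by rewrite ltnS leq_mul2r leqnSn orbT.
congr (_ + _); rewrite -{1}[(j * n).+1]add0n big_addn subSS mulSn addnK big_mkord.
by apply: eq_bigr => t _; rewrite -addSnnS addnC.
Qed.

End Sums.

Lemma enorm_wavgB_le (R : realType) (d : nat) (I : finType) (w : I -> R)
    (a b : I -> 'rV[R]_d) (M : R) :
  (forall i, 0 <= w i) -> 0 < \sum_i w i -> (forall i, enorm (a i - b i) <= M) ->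
  enorm ((\sum_i w i)^-1 *: \sum_i w i *: a i - (\sum_i w i)^-1 *: \sum_i w i *: b i)
  <= M.
Proof.
move=> w0 W0 abM.
rewrite -scalerBr -sumrB enormZ ger0_norm ?invr_ge0 ?(ltW W0) // ler_pdivrMl //.
apply: le_trans (enorm_sum_le _) _; rewrite mulr_suml ler_sum // => i _.
by rewrite -scalerBr enormZ ger0_norm // ler_wpM2l.
Qed.

Section PerSGD.
Variables (R : realType) (d : nat) (X : set 'rV[R]_d) (P : 'rV[R]_d -> 'rV[R]_d).
Hypotheses (convexX : convex_set X) (projP : is_proj X P).
Variables (L : R) (Z : Type) (g : Z -> 'rV[R]_d -> 'rV[R]_d).
Hypotheses (g_mono : forall z x y, X x -> X y -> 0 <= dotv (g z x - g z y) (x - y))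
  (g_bounded : forall z x, X x -> enorm (g z x) <= L).
Variables (n K : nat) (pi : {perm 'I_n}) (eta : nat -> R) (x0 : 'rV[R]_d).
Hypotheses (n_gt0 : (0 < n)%N) (K_gt0 : (0 < K)%N)
  (eta_gt0 : forall t, (1 <= t)%N -> (t <= n * K)%N -> 0 < eta t)
  (eta_noninc : forall t, (1 <= t)%N -> (t < n * K)%N -> eta t.+1 <= eta t)
  (x0X : X x0).

Local Notation start S := (persgd_start P g eta pi S x0).

Lemma eta_noninc_le p q : (1 <= p)%N -> (p <= q)%N -> (q <= n * K)%N -> eta q <= eta p.
Proof.
move=> p1 /subnK <-; elim: (q - p)%N => [|k IHk] kK; first by rewrite add0n.
by apply: le_trans _ (IHk _); [rewrite addSn; apply: eta_noninc | ]; lia.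
Qed.

Lemma pass_step_ge0 j : (j < K)%N -> forall t : 'I_n, 0 <= eta (j * n + t.+1).
Proof. by move=> jK t; apply/ltW/eta_gt0; have := ltn_ord t; nia. Qed.

Lemma persgd_startS S j :
  start S j.+1 =
  sgd_pass P g (fun t : 'I_n => eta (j * n + t.+1)) (fun t => S (pi t))
    (start S j) (enum 'I_n).
Proof. by rewrite /= /persgd_epoch subn1. Qed.

Lemma persgd_start_in S j : X (start S j).
Proof. by elim: j => // j IHj; rewrite persgd_startS; exact: sgd_pass_in. Qed.

Lemma etabar_gt0 k : (k < K)%N -> 0 < etabar n eta k.+1.
Proof.
move=> kK; rewrite /etabar subn1; apply: sumr_ord_gt0 => // t.
by apply: eta_gt0; have := ltn_ord t; nia.
Qed.

Lemma sum_eta_ge0 : 0 <= \sum_(1 <= t < n * K) eta t.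
Proof.
rewrite big_nat_cond; apply: sumr_ge0 => t /andP[/andP[t1 tK] _].
by rewrite ltW // eta_gt0 // ltnW.
Qed.

Lemma persgd_dist_le S S' M :
  (forall k, (k < K)%N -> enorm (start S k - start S' k) <= M) ->
  enorm (persgd P g eta pi x0 K S - persgd P g eta pi x0 K S') <= M.
Proof.
move=> startM; apply: enorm_wavgB_le => [k||k]; last exact: startM.
- exact/ltW/etabar_gt0.
- by apply: sumr_ord_gt0 => // k; exact: etabar_gt0.
Qed.

Variables (S S' : 'I_n -> Z) (i : 'I_n).
Hypothesis SS' : forall j, j != i -> S j = S' j.

Let p := (pi^-1)%g i.

Let L_ge0 : 0 <= L := le_trans (enorm_ge0 _) (g_bounded (S i) x0X).

Lemma samples_agree t : ~~ (t == p) -> S (pi t) = S' (pi t).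
Proof. by move=> tp; apply: SS'; rewrite (canF_eq (permK pi)). Qed.

Lemma count_differing_step : (count (pred1 p) (enum 'I_n) <= 1)%N.
Proof. by rewrite count_uniq_mem ?enum_uniq // leq_b1. Qed.

Lemma persgd_start_dist j : (j < K)%N ->
  enorm (start S j.+1 - start S' j.+1) <=
  Num.sqrt (\sum_(1 <= t < (j.+1 * n).+1) (2 * L * eta t) ^+ 2) +
  \sum_(m < j) 2 * L * eta (m.+1 * n + p.+1).
Proof.
elim: j => [|j IHj] jK.
  rewrite !persgd_startS big_ord0 addr0 big_nat_block big_geq // add0r.
  apply: le_trans (sgd_pass_dist_same convexX projP g_mono g_bounded
            (pass_step_ge0 jK) samples_agree (persgd_start_in _ _) count_differing_step) _.
  by rewrite big_enum.
rewrite (persgd_startS S j.+1) (persgd_startS S' j.+1).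
apply: le_trans (sgd_pass_dist convexX projP g_mono g_bounded (pass_step_ge0 jK)
  samples_agree _ (persgd_start_in _ _) (persgd_start_in _ _) _ _ (IHj (ltnW jK))) _.
- by apply: sumr_ge0 => *; rewrite sqr_ge0.
- apply: sumr_ge0 => m _; have := ltn_ord m; have := ltn_ord p => ? ?.
  by rewrite !mulr_ge0 // ltW // eta_gt0 //; nia.
rewrite (big_nat_block _ n j.+1) big_ord_recr /= big_enum big_enum_cond /=.
by rewrite big_pred1_eq addrA.
Qed.

Lemma differing_steps_le j : (j < K)%N ->
  n%:R * \sum_(m < j) eta (m.+1 * n + p.+1) <= \sum_(1 <= t < (j * n).+1) eta t.
Proof.
elim: j => [|j IHj] jK; first by rewrite big_ord0 mulr0 big_geq.
rewrite big_ord_recr /= mulrDr big_nat_block lerD ?IHj 1?ltnW //.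
rewrite mulr_natl -[n in _ *+ n]card_ord -sumr_const ler_sum // => t _.
by apply: eta_noninc_le; have := ltn_ord t; have := ltn_ord p; nia.
Qed.

Lemma persgd_start_dist_le k : (k < K)%N ->
  enorm (start S k - start S' k) <=
  2 * L * (Num.sqrt (\sum_(1 <= t < n * K) eta t ^+ 2) +
           2 / n%:R * \sum_(1 <= t < n * K) eta t).
Proof.
case: k => [|j] jK.
  by rewrite subrr enorm0 !mulr_ge0 ?addr_ge0 ?sqrtr_ge0 // ?mulr_ge0 ?divr_ge0 // sum_eta_ge0.
have squares : Num.sqrt (\sum_(1 <= t < (j.+1 * n).+1) (2 * L * eta t) ^+ 2) <=
               2 * L * Num.sqrt (\sum_(1 <= t < n * K) eta t ^+ 2).
  under eq_bigr do rewrite exprMn.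
  rewrite -mulr_sumr sqrtrM ?sqr_ge0 // sqrtr_sqr ger0_norm ?mulr_ge0 //.
  rewrite ler_wpM2l ?mulr_ge0 // ler_sqrt ?sumr_ge0 // => [|t _]; last by rewrite sqr_ge0.
  by apply: ler_sum_nat_widen => [|t _]; rewrite ?sqr_ge0 //; nia.
have linear : \sum_(m < j) 2 * L * eta (m.+1 * n + p.+1) <=
              2 * L * (2 / n%:R * \sum_(1 <= t < n * K) eta t).
  rewrite -mulr_sumr ler_wpM2l ?mulr_ge0 // mulrAC ler_pdivlMr ?ltr0n // mulrC.
  have := differing_steps_le (ltnW jK).
  have : \sum_(1 <= t < (j * n).+1) eta t <= \sum_(1 <= t < n * K) eta t.
    apply: ler_sum_nat_widen => [|t /andP[t1 tK]]; first by nia.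
    by rewrite ltW // eta_gt0 //; [apply: leq_trans t1 | rewrite ltnW].
  have := sum_eta_ge0; lra.
by apply: le_trans (persgd_start_dist (ltnW jK)) _; rewrite mulrDr lerD.
Qed.

End PerSGD.

Theorem theorem3p4 (R : realType) (d : nat) (X : set 'rV[R]_d) (Rad : R)
  (Z : Type) (f : Z -> 'rV[R]_d -> R) (g : Z -> 'rV[R]_d -> 'rV[R]_d) (L : R)
  (P : 'rV[R]_d -> 'rV[R]_d) (n K : nat) (pi : {perm 'I_n})
  (eta : nat -> R) (x0 : 'rV[R]_d) :
  compact X -> convex_set X -> (forall x, X x -> enorm x <= Rad) ->
  is_proj X P ->
  (* f(., z) in F^0_X(L) for every z *)
  (forall z, convex_on X (f z)) ->
  (forall z, exists U : set 'rV[R]_d, open U /\ X `<=` U /\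
     forall x y, U x -> U y -> `|f z x - f z y| <= L * enorm (x - y)) ->
  (* g z x is a subgradient of f(., z) at x, of norm at most L *)
  (forall z x, X x -> forall y, X y -> f z y >= f z x + dotv (g z x) (y - x)) ->
  (forall z x, X x -> enorm (g z x) <= L) ->
  (0 < n)%N -> (1 <= K)%N ->
  (forall t, (1 <= t)%N -> (t <= n * K)%N -> 0 < eta t) ->
  (forall t, (1 <= t)%N -> (t < n * K)%N -> eta t.+1 <= eta t) ->
  X x0 ->
  forall S S' : 'I_n -> Z, neighboring S S' ->
    enorm (persgd P g eta pi x0 K S - persgd P g eta pi x0 K S') <=
    Num.min (2 * Rad)
      (2 * L * (Num.sqrt (\sum_(1 <= t < n * K) eta t ^+ 2)
                + 2 / n%:R * \sum_(1 <= t < n * K) eta t)).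
Proof.
move=> _ convexX X_bounded projP _ _ subgrad g_bounded n_gt0 K_gt0 eta_gt0 eta_noninc x0X
  S S' [i SS'].
have g_mono z := subgradient_monotone (subgrad z).
have dist_le := persgd_dist_le n_gt0 K_gt0 eta_gt0.
rewrite le_min; apply/andP; split; apply: dist_le => k kK.
  apply: le_trans (enormB_le _ _) _.
  have := X_bounded _ (persgd_start_in projP g pi eta x0X S k).
  have := X_bounded _ (persgd_start_in projP g pi eta x0X S' k); lra.
exact: (persgd_start_dist_le convexX projP g_mono g_bounded pi n_gt0 K_gt0 eta_gt0 eta_noninc
  x0X SS' kK).
Qed.
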